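(* There exists an infinite sequence $\{(G_n,\tau_n)\}_{n\ge1}$ of finite simple graphs $G_n$ with threshold assignments $\tau_n$ such that $|G_n|\to\infty$, $\epsilon(G_n)/|G_n| = o(\overline{\tau_n})$, and $$\lim_{n\to\infty}\frac{Ldyn_{\overline{\tau_n}}(G_n)}{|G_n|}=1.$$
   Context: For a graph $G$, $|G|$ is the number of vertices and $\epsilon(G)=|E(G)|/|G|$. A threshold assignment is a function $\tau:V(G)\to\{0,1,2,\dots\}$ with $0\le\tau(v)\le deg_G(v)$ for all $v$; its average is $\overline{\tau}=\sum_v\tau(v)/|G|$. A set $D\subseteq V(G)$ is a $\tau$-dynamo if $V(G)$ can be partitioned into $D_0=D,D_1,\dots,D_k$ such that for each $1\le i\le k$, $D_i$ consists of all vertices not in $D_0\cup\dots\cup D_{i-1}$ having at least $\tau(v)$ neighbors in $D_0\cup\dots\cup D_{i-1}$; $dyn_\tau(G)$ is the minimum size of a $\tau$-dynamo. For $t>0$, $Ldyn_t(G)=\max\{dyn_\tau(G): \overline{\tau}\le t\}$. *)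

From mathcomp Require Import all_boot.
From Stdlib Require Import Reals ClassicalEpsilon.
Set Implicit Arguments. Unset Strict Implicit. Unset Printing Implicit Defensive.

Section Graphs.
Variable T : finType.
Variable e : rel T.

Definition simple_graph : Prop := symmetric e /\ irreflexive e.

Definition edges : {set {set T}} :=
  [set E : {set T} | [exists x, [exists y, e x y && (E == [set x; y])]]].

Definition eps : R := (INR #|edges| / INR #|T|)%R.

Definition deg (v : T) : nat := #|[set w | e v w]|.

Definition threshold (tau : T -> nat) : Prop := forall v, tau v <= deg v.

Definition avg (tau : T -> nat) : R := (INR (\sum_(v : T) tau v) / INR #|T|)%R.

Definition step (tau : T -> nat) (S : {set T}) : {set T} :=
  S :|: [set v | (v \notin S) && (tau v <= #|[set w in S | e v w]|)].

Definition dynamo (tau : T -> nat) (D : {set T}) : Prop :=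
  exists k, iter k (step tau) D = setT.

Definition dynamob (tau : T -> nat) (D : {set T}) : bool :=
  if excluded_middle_informative (dynamo tau D) then true else false.

(* dyn_tau(G): minimum size of a tau-dynamo (V(G) itself is one) *)
Definition dyn (tau : T -> nat) : nat :=
  \big[minn/#|T|]_(D : {set T} | dynamob tau D) #|D|.

Definition Rleb (a b : R) : bool := if Rle_dec a b then true else false.

(* Ldyn_t(G) = max { dyn_tau(G) : tau threshold assignment, avg tau <= t }.
   Threshold assignments take values <= deg v <= #|T|, so they are
   exactly the valid functions T -> 'I_(#|T|.+1). *)
Definition Ldyn (t : R) : nat :=
  \max_(tau : {ffun T -> 'I_(#|T|.+1)} |
          [forall v, (tau v : nat) <= deg v] && Rleb (avg (fun v => tau v)) t)
     dyn (fun v => tau v).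

End Graphs.

(* Take the complete graph K_n with every threshold equal to the degree
   n - 1.  A vertex outside a seed set D becomes active only when all of
   its n - 1 neighbours are already in D, so no set of size < n - 1 ever
   grows: dyn >= n - 1 while the average threshold n - 1 tends to infinity.
   Meanwhile eps(K_n)/n = (n - 1)/(2n) stays bounded, hence is o(n - 1). *)

From mathcomp Require Import all_boot.
From Stdlib Require Import Reals Lra ClassicalEpsilon.

Set Implicit Arguments.
Unset Strict Implicit.
Unset Printing Implicit Defensive.

Section Dynamos.
Variable T : finType.
Variable e : rel T.

Lemma deg_le_card v : deg e v <= #|T|.
Proof. exact: max_card. Qed.

Lemma eq_step tau tau' : tau =1 tau' -> step e tau =1 step e tau'.
Proof. by move=> eq_tau S; apply/setP => v; rewrite !inE eq_tau. Qed.

Lemma eq_dyn tau tau' : tau =1 tau' -> dyn e tau = dyn e tau'.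
Proof.
move=> eq_tau; apply: eq_bigl => D.
have iterE k : iter k (step e tau) D = iter k (step e tau') D.
  by elim: k => //= k ->; apply: eq_step.
have dynamoE : dynamo e tau D <-> dynamo e tau' D.
  by split=> [[k Dk]|[k Dk]]; exists k; rewrite ?iterE // -iterE.
rewrite /dynamob.
case: excluded_middle_informative => dynD;
  case: excluded_middle_informative => // dynD'; exfalso.
- exact/dynD'/dynamoE.
- exact/dynD/dynamoE.
Qed.

Lemma iter_step_fixed k tau D : step e tau D = D -> iter k (step e tau) D = D.
Proof. by move=> fixD; elim: k => //= k ->. Qed.

Lemma dyn_le_card tau : dyn e tau <= #|T|.
Proof.
apply: (big_ind (fun x => x <= #|T|)) => // [x y le_x _|D _].
- by rewrite geq_min le_x.
- exact: max_card.
Qed.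

Lemma dyn_ge m tau :
  m <= #|T| -> (forall D : {set T}, #|D| < m -> step e tau D = D) ->
  m <= dyn e tau.
Proof.
move=> le_m_T stable; apply: (big_ind (fun x => m <= x)) => // [x y mx my|D].
  by rewrite leq_min mx.
rewrite /dynamob; case: excluded_middle_informative => // [[k Dk]] _.
rewrite leqNgt; apply/negP => small_D.
have := iter_step_fixed k (stable D small_D); rewrite Dk => fullD.
by move: small_D; rewrite -fullD cardsT ltnNge le_m_T.
Qed.

Lemma avg_eq (tau tau' : T -> nat) : tau =1 tau' -> avg tau = avg tau'.
Proof. by move=> eq_tau; rewrite /avg (eq_bigr _ (fun v _ => eq_tau v)). Qed.

Lemma avg_const (c : nat) : 0 < #|T| -> avg (fun _ : T => c) = INR c.
Proof.
move=> T_gt0; rewrite /avg big_const iter_addn_0 mult_INR.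
change #|xpredT| with #|T|.
have T_pos : (0 < INR #|T|)%R by apply: lt_0_INR; apply/ltP.
by field; lra.
Qed.

Lemma Ldyn_le_card t : Ldyn e t <= #|T|.
Proof.
apply: (big_ind (fun x => x <= #|T|)) => // [x y le_x le_y|tau _].
  by rewrite geq_max le_x.
exact: dyn_le_card.
Qed.

Lemma dyn_le_Ldyn tau t :
  threshold e tau -> (avg tau <= t)%R -> dyn e tau <= Ldyn e t.
Proof.
move=> thr_tau avg_le.
pose tau' : {ffun T -> 'I_(#|T|.+1)} := [ffun v => inord (tau v)].
have tau'E v : (tau' v : nat) = tau v.
  by rewrite ffunE inordK // ltnS (leq_trans (thr_tau v)) ?deg_le_card.
rewrite (eq_dyn (tau' := fun v => tau' v)) => [|v]; last by rewrite tau'E.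
apply: leq_bigmax_cond; apply/andP; split.
  by apply/forallP => v; rewrite tau'E.
rewrite /Rleb (avg_eq (tau' := tau)) //.
by case: Rle_dec.
Qed.

Lemma card_edges_le : #|edges e| <= #|T| * #|T|.
Proof.
rewrite -card_prod -cardsT.
have sub_pairs : edges e \subset [set [set p.1; p.2] | p in [set: T * T]].
  apply/subsetP => E; rewrite inE => /existsP[x /existsP[y /andP[_ /eqP->]]].
  by apply/imsetP; exists (x, y); rewrite ?inE.
exact: leq_trans (subset_leq_card sub_pairs) (leq_imset_card _ _).
Qed.

Lemma eps_div_card_bounds :
  0 < #|T| -> (0 <= eps e / INR #|T| <= 1)%R.
Proof.
move=> T_gt0.
have T_pos : (0 < INR #|T|)%R by apply: lt_0_INR; apply/ltP.
have E_le : (INR #|edges e| <= INR #|T| * INR #|T|)%R.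
  by rewrite -mult_INR; apply: le_INR; apply/leP; apply: card_edges_le.
have E_ge0 := pos_INR #|edges e|.
have -> : (eps e / INR #|T| = INR #|edges e| / (INR #|T| * INR #|T|))%R.
  by rewrite /eps; field; lra.
have sq_pos : (0 < INR #|T| * INR #|T|)%R by nra.
split; first by apply: Rmult_le_pos => //; left; apply: Rinv_0_lt_compat.
apply: (Rmult_le_reg_r _ _ _ sq_pos).
by rewrite /Rdiv Rmult_assoc Rinv_l; lra.
Qed.

End Dynamos.

Section CompleteGraph.
Variable T : finType.

Definition complete : rel T := fun x y => x != y.

Lemma complete_simple : simple_graph complete.
Proof. by split=> [x y|x]; rewrite /complete ?eqxx // eq_sym. Qed.

Lemma deg_complete v : deg complete v = #|T|.-1.
Proof. by rewrite /deg -(cardsC1 v); apply: eq_card => w; rewrite !inE eq_sym. Qed.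

(* A vertex outside D has at most #|D| < #|T|.-1 neighbours in D. *)
Lemma step_complete_full_small (D : {set T}) :
  #|D| < #|T|.-1 -> step complete (fun=> #|T|.-1) D = D.
Proof.
move=> small_D; apply/setP => v; rewrite !inE.
case: (v \in D) => //=; apply/negbTE; rewrite -ltnNge.
apply: leq_ltn_trans small_D; apply: subset_leq_card.
by apply/subsetP => w; rewrite inE => /andP[].
Qed.

Lemma dyn_complete_full : #|T|.-1 <= dyn complete (fun=> #|T|.-1).
Proof. exact: dyn_ge (leq_pred _) step_complete_full_small. Qed.

Lemma Ldyn_complete_full :
  0 < #|T| -> #|T|.-1 <= Ldyn complete (INR #|T|.-1) <= #|T|.
Proof.
move=> T_gt0; rewrite Ldyn_le_card andbT.
apply: leq_trans dyn_complete_full (dyn_le_Ldyn _ _) => [v|].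
  by rewrite deg_complete.
by rewrite avg_const //; apply: Rle_refl.
Qed.

End CompleteGraph.

Lemma bounded_little_o_succ (x : nat -> R) :
  (forall n, 0 <= x n <= 1)%R ->
  forall c : R, (0 < c)%R -> exists n0, forall n, (n0 <= n)%nat ->
    (Rabs (x n) <= c * Rabs (INR n.+1))%R.
Proof.
move=> x_bounds c c_pos; have [M [inv_M_lt M_pos]] := archimed_cor1 c c_pos.
exists M => n le_M_n; have [x_ge0 x_le1] := x_bounds n.
rewrite (Rabs_pos_eq _ x_ge0) (Rabs_pos_eq _ (pos_INR _)).
have M_R_pos : (0 < INR M)%R by apply: lt_0_INR.
have M_le_n : (INR M <= INR n.+1)%R by apply: le_INR; apply/leP; apply: leqW.
have : (1 < c * INR M)%R.
  by rewrite -(Rinv_l (INR M)); [apply: Rmult_lt_compat_r | lra].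
have : (c * INR M <= c * INR n.+1)%R by apply: Rmult_le_compat_l; lra.
lra.
Qed.

Lemma Un_cv_ratio_to_1 (a : nat -> nat) :
  (forall n, n.+1 <= a n <= n.+2) -> Un_cv (fun n => INR (a n) / INR n.+2)%R 1%R.
Proof.
move=> a_bounds eps eps_pos; have [M [inv_M_lt M_pos]] := archimed_cor1 eps eps_pos.
exists M => n /leP le_M_n; rewrite /R_dist.
have /andP[lo hi] := a_bounds n.
have lo_R : (INR n.+2 - 1 <= INR (a n))%R.
  by rewrite S_INR; have := le_INR _ _ (leP lo); lra.
have hi_R : (INR (a n) <= INR n.+2)%R by apply: le_INR; apply/leP.
have M_R_pos : (0 < INR M)%R by apply: lt_0_INR.
have M_le : (INR M <= INR n.+2)%R by apply: le_INR; apply/leP; rewrite !leqW.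
have inv_lt : (/ INR n.+2 < eps)%R.
  by apply: Rle_lt_trans inv_M_lt; apply: Rinv_le_contravar.
have N_pos : (0 < INR n.+2)%R by lra.
have -> : (INR (a n) / INR n.+2 - 1 = - ((INR n.+2 - INR (a n)) / INR n.+2))%R.
  by field; lra.
rewrite Rabs_Ropp Rabs_pos_eq; last first.
  by apply: Rmult_le_pos; [lra | left; apply: Rinv_0_lt_compat].
apply: Rle_lt_trans inv_lt; rewrite /Rdiv -[X in (_ <= X)%R]Rmult_1_l.
by apply: Rmult_le_compat_r; [left; apply: Rinv_0_lt_compat | lra].
Qed.

Theorem proposition3 :
  exists (N : nat -> nat) (e : forall n, rel 'I_(N n))
         (tau : forall n, 'I_(N n) -> nat),
    (forall n, simple_graph (e n)) /\
    (forall n, threshold (e n) (tau n)) /\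
    (* |G_n| -> infinity *)
    (forall M : nat, exists n0, forall n, (n0 <= n)%nat -> (M <= N n)%nat) /\
    (* eps(G_n)/|G_n| = o(avg tau_n) *)
    (forall c : R, (0 < c)%R -> exists n0, forall n, (n0 <= n)%nat ->
        (Rabs (eps (e n) / INR (N n)) <= c * Rabs (avg (tau n)))%R) /\
    (* Ldyn_{avg tau_n}(G_n) / |G_n| -> 1 *)
    Un_cv (fun n => (INR (Ldyn (e n) (avg (tau n))) / INR (N n))%R) 1%R.
Proof.
have card_gt0 n : 0 < #|'I_n.+2| by rewrite card_ord.
have avgE n : avg (fun _ : 'I_n.+2 => n.+1) = INR n.+1 by apply: avg_const.
exists (fun n => n.+2), (fun n => @complete 'I_n.+2), (fun n _ => n.+1).
split; [|split; [|split; [|split]]].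
- by move=> n; apply: complete_simple.
- by move=> n v; rewrite deg_complete card_ord.
- by move=> M; exists M => n le_M_n; rewrite !leqW.
- move=> c c_pos; have [n0 small] := bounded_little_o_succ
    (fun n => eps_div_card_bounds (@complete 'I_n.+2) (card_gt0 n)) c_pos.
  by exists n0 => n /small; rewrite avgE card_ord.
- apply: Un_cv_ratio_to_1 => n; rewrite avgE.
  by have := Ldyn_complete_full (card_gt0 n); rewrite card_ord.
Qed.
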